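(* Let $V$ be a real vector space of finite even dimension $n$ with nondegenerate quadratic form $Q$, and let $\sigma$ be a real structure on $\mathbb{C}l(V)$. Then the $\sigma$-product $(a,b)_\sigma:=\tau_n(\sigma(a^T)b)$ is a nondegenerate hermitian form on $\mathbb{C}l(V)$; its associated quadratic form restricts to $Q_\sigma$ on $V$ (i.e. $(v,v)_\sigma=Q_\sigma(v)$ for $v\in V$) and to $Q$ on $V_\sigma$; it satisfies $(w_1\cdots w_k,w_1\cdots w_k)_\sigma=Q(w_1)\cdots Q(w_k)$ for all $w_1,\dots,w_k\in V_\sigma$; and if $(e_i)_{1\le i\le n}$ is a pseudo-orthonormal basis of $V_\sigma$ for $Q$, then $(e_I)_{I\subset\{1,\dots,n\}}$ is a pseudo-orthonormal basis of $\mathbb{C}l(V)$ for the $\sigma$-product.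
   Context: $Cl(V,Q)$ is the real Clifford algebra with $v^2=+Q(v)$, $\mathbb{C}l(V)$ its complexification, $V^{\mathbb{C}}\subset\mathbb{C}l(V)$, $B$ the bilinear form of $Q$ extended complex-bilinearly. $T$ is the linear antiautomorphism of $\mathbb{C}l(V)$ restricting to the identity on $V$, $a^T=T(a)$. A real structure is an involutive antilinear algebra automorphism of $\mathbb{C}l(V)$ stabilizing $V^{\mathbb{C}}$. $V_\sigma=\{v\in V^{\mathbb{C}}:\sigma(v)=v\}$ (on which $Q$ is real and nondegenerate); $Q_\sigma(v)=B(\sigma(v),v)$ for $v\in V$. For a basis $(e_i)$ and $I=\{i_1<\dots<i_k\}$, $e_I=e_{i_1}\cdots e_{i_k}$, $e_\emptyset=1$. The normalized trace $\tau_n:\mathbb{C}l(V)\to\mathbb{C}$ is the coordinate on $1$ in the basis $(e_I)$ associated with any pseudo-orthonormal basis of $V^{\mathbb{C}}$ (it is the unique linear form with $\tau_n(ab)=\tau_n(ba)$ and $\tau_n(1)=1$). A pseudo-orthonormal basis for a form is an orthogonal basis whose vectors have square $\pm1$. *)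

From HB Require Import structures.
From mathcomp Require Import all_boot all_order all_algebra all_field.
From mathcomp Require Import complex.
Set Implicit Arguments. Unset Strict Implicit. Unset Printing Implicit Defensive.
Import Order.TTheory GRing.Theory Num.Theory.
Local Open Scope ring_scope.

Definition cplx (R : rcfType) (x : R) : R[i] := (x%:C)%C.

(* V = R^n (row vectors), Q(v) = v G v^T with G symmetric invertible.
   V^C = R[i]^n, and B is the complex-bilinear extension of the polar form. *)
Definition cvec (R : rcfType) n (v : 'rV[R]_n) : 'rV[R[i]]_n := map_mx (@cplx R) v.
Definition Bform (R : rcfType) n (G : 'M[R]_n) (u v : 'rV[R[i]]_n) : R[i] :=
  (u *m map_mx (@cplx R) G *m v^T) 0 0.

(* e_I = e_{i_1} ... e_{i_k} for I = {i_1 < ... < i_k} (enum of a set of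
   ordinals is increasing). *)
Definition monom (R : rcfType) n (A : falgType R[i]) (iota : 'rV[R[i]]_n -> A)
  (e : 'I_n -> 'rV[R[i]]_n) (X : {set 'I_n}) : A :=
  \prod_(i <- enum X) iota (e i).

Definition monoms (R : rcfType) n (A : falgType R[i]) (iota : 'rV[R[i]]_n -> A)
  (e : 'I_n -> 'rV[R[i]]_n) : seq A :=
  [seq monom iota e X | X <- enum [set: {set 'I_n}]].

(* (A, iota) is the complex Clifford algebra Cl(V)^C = Cl(V^C, B):
   iota : V^C -> A complex linear, iota(v)^2 = B(v,v), A is generated (spanned)
   by the products of the images of a basis of V^C, and dim A = 2^n. *)
Definition is_complex_clifford (R : rcfType) n (G : 'M[R]_n)
  (A : falgType R[i]) (iota : 'rV[R[i]]_n -> A) : Prop :=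
  [/\ forall (a : R[i]) u v, iota (a *: u + v) = a *: iota u + iota v,
      forall v, iota v * iota v = (Bform G v v)%:A,
      span (monoms iota (fun i => delta_mx 0%R i)) = fullv
    & dimv (fullv : {vspace A}) = (2 ^ n)%N].

Definition is_real_structure (R : rcfType) n (A : falgType R[i])
  (iota : 'rV[R[i]]_n -> A) (sigma : A -> A) : Prop :=
  [/\ forall x y, sigma (x + y) = sigma x + sigma y,
      forall (c : R[i]) x, sigma (c *: x) = (Num.conj c) *: sigma x,
      forall x y, sigma (x * y) = sigma x * sigma y,
      sigma 1 = 1
    & (forall x, sigma (sigma x) = x) /\ forall v, exists w, sigma (iota v) = iota w].

(* T : the linear antiautomorphism which is the identity on V (hence on V^C). *)
Definition is_transposition (R : rcfType) n (A : falgType R[i])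
  (iota : 'rV[R[i]]_n -> A) (T : A -> A) : Prop :=
  [/\ forall (c : R[i]) x y, T (c *: x + y) = c *: T x + T y,
      forall x y, T (x * y) = T y * T x,
      T 1 = 1
    & forall v : 'rV[R]_n, T (iota (cvec v)) = iota (cvec v)].

Definition is_normalized_trace (R : rcfType) (A : falgType R[i]) (tau : A -> R[i]) :
  Prop :=
  [/\ forall (c : R[i]) x y, tau (c *: x + y) = c * tau x + tau y,
      forall x y, tau (x * y) = tau (y * x)
    & tau 1 = 1].

Definition sigma_prod (R : rcfType) (A : falgType R[i]) (sigma T : A -> A)
  (tau : A -> R[i]) (a b : A) : R[i] := tau (sigma (T a) * b).

Definition is_hermitian_form (R : rcfType) (A : falgType R[i]) (f : A -> A -> R[i]) : Prop :=
  [/\ forall (c : R[i]) a b1 b2, f a (c *: b1 + b2) = c * f a b1 + f a b2,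
      forall (c : R[i]) a1 a2 b, f (c *: a1 + a2) b = (Num.conj c) * f a1 b + f a2 b
    & forall a b, f b a = Num.conj (f a b)].

Definition nondegenerate_form (R : rcfType) (A : falgType R[i]) (f : A -> A -> R[i]) : Prop :=
  forall a, (forall b, f a b = 0) -> a = 0.

Definition in_Vsigma (R : rcfType) n (A : falgType R[i])
  (iota : 'rV[R[i]]_n -> A) (sigma : A -> A) (v : 'rV[R[i]]_n) : Prop :=
  sigma (iota v) = iota v.

Definition pseudo_orthonormal_basis_Vsigma (R : rcfType) n (G : 'M[R]_n)
  (A : falgType R[i]) (iota : 'rV[R[i]]_n -> A) (sigma : A -> A)
  (e : 'I_n -> 'rV[R[i]]_n) : Prop :=
  [/\ forall i, in_Vsigma iota sigma (e i),
      forall v, in_Vsigma iota sigma v ->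
        exists c : 'I_n -> R, v = \sum_i cplx (c i) *: e i,
      forall c : 'I_n -> R, \sum_i cplx (c i) *: e i = 0 -> forall i, c i = 0,
      forall i j, i != j -> Bform G (e i) (e j) = 0
    & forall i, Bform G (e i) (e i) = 1 \/ Bform G (e i) (e i) = -1].

Definition pseudo_orthonormal_basis_A (R : rcfType) n (A : falgType R[i])
  (f : A -> A -> R[i]) (b : {set 'I_n} -> A) : Prop :=
  [/\ basis_of fullv [seq b X | X <- enum [set: {set 'I_n}]],
      forall X1 X2, X1 != X2 -> f (b X1) (b X2) = 0
    & forall X, f (b X) (b X) = 1 \/ f (b X) (b X) = -1].

From HB Require Import structures.
From mathcomp Require Import all_boot all_order all_algebra all_field.
From mathcomp Require Import complex.
Import Order.TTheory GRing.Theory Num.Theory.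
Local Open Scope ring_scope.

Set Implicit Arguments. Unset Strict Implicit. Unset Printing Implicit Defensive.

(* For an orthogonal basis (e_i) of V^C with
   B(e_i, e_i) <> 0 the generators e_i pairwise anticommute, so conjugating a monomial
   by e_i only changes its sign; cyclicity of a normalized trace t then forces
   t(e_I) = 0 for every nonempty I (for I = {1, ..., n} because n is even).  Hence
   t(e_J^rev e_I) vanishes for I <> J and equals the product of the B(e_i, e_i) for
   I = J: the 2^n monomials are free, hence a basis, t is nondegenerate, and t is
   unique.  Uniqueness identifies tau o T and conj o tau o sigma with tau; together
   with T o T = id and T o sigma = sigma o T (algebra maps are determined by their
   values on V) this gives hermitian symmetry.  Finally, when the e_i are fixed by
   sigma, sigma(T(e_I)) is the reversed monomial, so the sigma-product of monomials is
   the trace pairing above. *)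

Section SymmetricForm.
Variables (K : fieldType) (n : nat) (M : 'M[K]_n).
Hypothesis M_sym : M^T = M.

Local Notation "''[' u , v ]" := (((u : 'rV[K]_n) *m M *m (v : 'rV[K]_n)^T) 0 0)
  : ring_scope.

Lemma mxformC (u v : 'rV[K]_n) : '[u, v] = '[v, u].
Proof.
have trmx11 (N : 'M[K]_1) : N 0 0 = N^T 0 0 by rewrite mxE.
by rewrite trmx11 !trmx_mul trmxK M_sym mulmxA.
Qed.

Lemma mxformDl (u v w : 'rV[K]_n) : '[u + v, w] = '[u, w] + '[v, w].
Proof. by rewrite !mulmxDl mxE. Qed.

Lemma mxformZl a (u w : 'rV[K]_n) : '[a *: u, w] = a * '[u, w].
Proof. by rewrite -!scalemxAl mxE. Qed.

Lemma mxform_suml I r (P : pred I) (F : I -> 'rV[K]_n) (w : 'rV[K]_n) :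
  '[\sum_(i <- r | P i) F i, w] = \sum_(i <- r | P i) '[F i, w].
Proof. by rewrite !mulmx_suml summxE. Qed.

Lemma mxformDr (u v w : 'rV[K]_n) : '[u, v + w] = '[u, v] + '[u, w].
Proof. by rewrite [LHS]mxformC mxformDl -!(mxformC u). Qed.

Lemma mxform_sqrD (u v : 'rV[K]_n) :
  '[u + v, u + v] = '[u, u] + '[u, v] *+ 2 + '[v, v].
Proof. by rewrite !mxformDl !mxformDr (mxformC v u) mulr2n !addrA. Qed.

Lemma mxform_delta (u : 'rV[K]_n) j : '[u, delta_mx 0 j] = (u *m M) 0 j.
Proof. by rewrite trmx_delta -colE mxE. Qed.

Hypothesis two_neq0 : (2%:R : K) != 0.

Lemma exists_anisotropic (u v : 'rV[K]_n) : '[u, v] != 0 ->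
  exists a b, '[a *: u + b *: v, a *: u + b *: v] != 0.
Proof.
move=> uv_neq0.
have [uu0|] := eqVneq '[u, u] 0; last by exists 1, 0; rewrite scale1r scale0r addr0.
have [vv0|] := eqVneq '[v, v] 0; last by exists 0, 1; rewrite scale1r scale0r add0r.
exists 1, 1; rewrite !scale1r mxform_sqrD uu0 vv0 add0r addr0 -mulr_natr.
by rewrite mulf_neq0.
Qed.

Lemma exists_orthogonal_neq0 (s : seq 'rV[K]_n) : (size s < n)%N ->
  exists2 u, u != 0 & {in s, forall v, '[u, v] = 0}.
Proof.
move=> lt_s_n; pose N := M *m (\matrix_(j < size s, l < n) s`_j 0 l)^T.
have form_N u (j : 'I_(size s)) : '[u, s`_j] = (u *m N) 0 j.
  by rewrite mulmxA !mxE; apply: eq_bigr => l _; rewrite !mxE.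
have : kermx N != 0.
  rewrite -mxrank_eq0 mxrank_ker subn_eq0 -ltnNge.
  exact: leq_ltn_trans (rank_leq_col N) lt_s_n.
case/rowV0Pn => u /sub_kermxP uN0 u_neq0; exists u => // v /(nthP 0)[j lt_j_s <-].
by rewrite (form_N u (Ordinal lt_j_s)) uN0 mxE.
Qed.

Definition orthogonal_seq (s : seq 'rV[K]_n) : Prop :=
  [/\ uniq s, {in s &, forall u v, u != v -> '[u, v] = 0}
    & {in s, forall u, '[u, u] != 0}].

Section Nondegenerate.
Hypothesis M_unit : M \in unitmx.

Lemma form_neq0 (u : 'rV[K]_n) : u != 0 -> exists v, '[u, v] != 0.
Proof.
move=> u_neq0; have : u *m M != 0 by rewrite mulmx_free_eq0 ?row_free_unit.
case/matrix0Pn => i [j]; rewrite (ord1 i) => uMj.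
by exists (delta_mx 0 j); rewrite mxform_delta.
Qed.

Lemma orthogonal_seq_cons (s : seq 'rV[K]_n) :
  (size s < n)%N -> orthogonal_seq s -> exists u, orthogonal_seq (u :: s).
Proof.
move=> lt_s_n [s_uniq s_orth s_aniso].
have [u u_neq0 u_orth] := exists_orthogonal_neq0 lt_s_n.
have [v uv_neq0] := form_neq0 u_neq0.
(* Gram-Schmidt: v' is orthogonal to s and still pairs nontrivially with u, so some
   combination of u and v' is anisotropic and orthogonal to s. *)
pose v' := v - \sum_(w <- s) ('[v, w] / '[w, w]) *: w.
have v'_orth : {in s, forall w, '[v', w] = 0}.
  move=> w ws; rewrite mxformDl -scaleN1r mxformZl mxform_suml (bigD1_seq w) //=.
  rewrite big1_seq => [|w' /andP[w'w w's]]; last by rewrite mxformZl s_orth ?mulr0.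
  by rewrite addr0 mxformZl mulfVK ?s_aniso // mulN1r subrr.
have uv'_neq0 : '[u, v'] != 0.
  rewrite mxformC mxformDl -scaleN1r mxformZl mxform_suml big1_seq.
    by rewrite mulr0 addr0 mxformC.
  by move=> w /andP[_ ws]; rewrite mxformZl (mxformC w) u_orth ?mulr0.
have [a [b ab_aniso]] := exists_anisotropic uv'_neq0.
set w := a *: u + b *: v' in ab_aniso.
have w_orth : {in s, forall w', '[w, w'] = 0}.
  by move=> w' w's; rewrite mxformDl !mxformZl u_orth ?v'_orth // !mulr0 addr0.
have w_notin_s : w \notin s by apply: contra ab_aniso => /w_orth ->.
exists w; split; first by rewrite /= w_notin_s.
  move=> w1 w2; rewrite !inE => /predU1P[->|w1s] /predU1P[->|w2s];
    by [rewrite eqxx | rewrite w_orth | rewrite mxformC w_orth | exact: s_orth].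
by move=> w1; rewrite inE => /predU1P[->|/s_aniso].
Qed.

Lemma exists_orthogonal_seq k :
  (k <= n)%N -> exists2 s, size s = k & orthogonal_seq s.
Proof.
elim: k => [|k IHk lt_k_n]; first by exists [::].
have [s size_s s_orth] := IHk (ltnW lt_k_n).
have [|u us_orth] := orthogonal_seq_cons _ s_orth; first by rewrite size_s.
by exists (u :: s); rewrite /= ?size_s.
Qed.

Lemma exists_orthogonal_basis : exists e : 'I_n -> 'rV[K]_n,
  (forall i j, i != j -> '[e i, e j] = 0) /\ forall i, '[e i, e i] != 0.
Proof.
have [s size_s [s_uniq s_orth s_aniso]] := exists_orthogonal_seq (leqnn n).
exists (fun i => s`_i); split => [i j ij|i]; last by rewrite s_aniso ?mem_nth ?size_s.
by rewrite s_orth ?mem_nth ?nth_uniq ?size_s.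
Qed.

End Nondegenerate.

Section CliffordMap.
Variables (A : lalgType K) (iota : {linear 'rV[K]_n -> A}).
Hypothesis iota_sqr : forall v, iota v * iota v = '[v, v]%:A.

Lemma clifford_anticomm (u v : 'rV[K]_n) :
  iota u * iota v + iota v * iota u = ('[u, v] *+ 2)%:A.
Proof.
have := iota_sqr (u + v); rewrite raddfD mulrDl !mulrDr !iota_sqr mxform_sqrD.
by rewrite !scalerDl addrA => /addIr; rewrite -addrA => /addrI.
Qed.

Lemma clifford_anticomm_orth (u v : 'rV[K]_n) :
  '[u, v] = 0 -> iota u * iota v = - (iota v * iota u).
Proof.
by move=> uv0; apply/eqP; rewrite -addr_eq0 clifford_anticomm uv0 mul0rn scale0r.
Qed.

Lemma trace_clifford_mul (t : {scalar A}) :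
  (forall a b : A, t (a * b) = t (b * a)) -> t 1 = 1 ->
  forall u v : 'rV[K]_n, t (iota u * iota v) = '[u, v].
Proof.
move=> t_central t1 u v; apply: (mulIf two_neq0); rewrite !mulr_natr mulr2n.
have := congr1 t (clifford_anticomm u v).
by rewrite raddfD scalarZ t1 mulr1 => <-; congr (_ + _); exact: t_central.
Qed.

End CliffordMap.
End SymmetricForm.

Lemma prod_rev_mul_prod (K : comPzRingType) (A : algType K) I
    (y : I -> A) (q : I -> K) :
  (forall i, y i * y i = (q i)%:A) ->
  forall s, \prod_(i <- rev s) y i * \prod_(i <- s) y i = (\prod_(i <- s) q i)%:A.
Proof.
move=> y_sqr; elim=> [|i s IHs]; first by rewrite !big_nil mul1r scale1r.
rewrite rev_cons -cats1 big_cat big_seq1 !big_cons mulrA -[_ * y i * y i]mulrA.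
by rewrite y_sqr mulr_algr -scalerAl IHs scalerA mulrC.
Qed.

Lemma prod_sign (K : pzRingType) I (s : seq I) (F : I -> K) :
  (forall i, F i = 1 \/ F i = -1) ->
  \prod_(i <- s) F i = 1 \/ \prod_(i <- s) F i = -1.
Proof.
move=> F_sign; elim: s => [|i s IHs]; first by rewrite big_nil; left.
rewrite big_cons; have [->|->] := F_sign i;
  case: IHs => ->; rewrite ?mulr1 ?mulrN1 ?opprK; by [left | right].
Qed.

Lemma linear_eq_in_span (K : fieldType) (V : vectType K) (W : nmodType)
    (s : K -> W -> W) (f g : {linear V -> W | s}) (X : seq V) :
  {in X, f =1 g} -> {in <<X>>%VS, f =1 g}.
Proof.
move=> eq_fg v /(coord_span (X := in_tuple X)) ->; rewrite !linear_sum.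
by apply: eq_bigr => i _; rewrite !linearZ_LR eq_fg ?mem_nth.
Qed.

Section Biorthogonal.
Variables (K : fieldType) (V : vectType K) (m : nat) (X : m.-tuple V).
Variable phi : 'I_m -> {scalar V}.
Hypotheses (phi_orth : forall i j, i != j -> phi i X`_j = 0)
           (phi_neq0 : forall i, phi i X`_i != 0).

Lemma biorthogonal_coord (k : 'I_m -> K) i :
  phi i (\sum_j k j *: X`_j) = k i * phi i X`_i.
Proof.
rewrite linear_sum (bigD1 i) //= big1 => [|j ji]; first by rewrite addr0 scalarZ.
by rewrite scalarZ phi_orth ?mulr0 // eq_sym.
Qed.

Lemma biorthogonal_free : free X.
Proof.
apply/freeP => k k0 i; apply: (mulIf (phi_neq0 i)).
by rewrite -biorthogonal_coord k0 raddf0 mul0r.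
Qed.

Lemma biorthogonal_eq0 v : v \in <<X>>%VS -> (forall i, phi i v = 0) -> v = 0.
Proof.
move=> /coord_span-> phi_v0; apply: big1 => i _.
have := phi_v0 i; rewrite biorthogonal_coord => /eqP.
by rewrite mulf_eq0 (negPf (phi_neq0 i)) orbF => /eqP->; rewrite scale0r.
Qed.

End Biorthogonal.

(* An x_i anticommuting with an odd number of factors of rev_monomial X * monomial Y;
   when #|X| + #|Y| is odd, i must lie in both or neither of X and Y, which fails only
   for Y = ~: X, excluded by n even. *)
Lemma exists_odd_count_predC n (X Y : {set 'I_n}) : ~~ odd n -> X != Y ->
  exists i, odd (count (predC (pred1 i)) (rev (enum X) ++ enum Y)).
Proof.
move=> n_even neqXY.
have count_split i : (count (predC (pred1 i)) (rev (enum X) ++ enum Y)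
    + ((i \in X) + (i \in Y)) = #|X| + #|Y|)%N.
  rewrite -(mem_enum X i) -(mem_enum Y i) -!count_uniq_mem ?enum_uniq //.
  rewrite count_cat count_rev addnACA !cardE -!(count_predC (pred1 i)).
  by rewrite (addnC (count_mem i (enum X))) (addnC (count_mem i (enum Y))).
have odd_count_split i : odd (count (predC (pred1 i)) (rev (enum X) ++ enum Y))
    = odd (#|X| + #|Y|) (+) ((i \in X) (+) (i \in Y)).
  by rewrite -(count_split i) !oddD !oddb addbK.
have [odd_XY|even_XY] := boolP (odd (#|X| + #|Y|)).
  have /existsP[i /eqP eq_i] : [exists i, (i \in X) == (i \in Y)].
    apply: contraLR odd_XY => /existsPn neq_XY.
    have -> : Y = ~: X.
      apply/setP => i; rewrite inE; move: (neq_XY i).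
      by case: (i \in X); case: (i \in Y).
    by rewrite cardsC card_ord.
  by exists i; rewrite odd_count_split odd_XY eq_i addbb.
have /existsP[i neq_i] : [exists i, (i \in X) != (i \in Y)].
  by apply: contraNT neqXY => /existsPn eq_XY; apply/eqP/setP => i; apply/eqP/negbNE.
exists i; rewrite odd_count_split (negPf even_XY).
by move: neq_i; case: (i \in X); case: (i \in Y).
Qed.

Definition monomial (A : pzSemiRingType) n (x : 'I_n -> A) (X : {set 'I_n}) : A :=
  \prod_(i <- enum X) x i.

Definition rev_monomial (A : pzSemiRingType) n (x : 'I_n -> A) (X : {set 'I_n}) : A :=
  \prod_(i <- rev (enum X)) x i.

Definition monomials (A : pzSemiRingType) n (x : 'I_n -> A) : seq A :=
  [seq monomial x X | X <- enum [set: {set 'I_n}]].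

Lemma algebra_endo_id (K : fieldType) (A : falgType K) n (x : 'I_n -> A)
    (f : {linear A -> A}) :
  <<monomials x>>%VS = fullv -> f 1 = 1 -> {morph f : a b / a * b} ->
  (forall i, f (x i) = x i) -> f =1 id.
Proof.
move=> span_x f1 fM fx a.
apply: (linear_eq_in_span (f := f) (g := idfun) (X := monomials x)); last first.
  by rewrite span_x memvf.
move=> _ /mapP[X _ ->] /=; rewrite /monomial (big_morph f fM f1).
by apply: eq_bigr => i _; exact: fx.
Qed.

Section CliffordFamily.
Variables (K : fieldType) (A : falgType K) (n : nat) (x : 'I_n -> A) (q : 'I_n -> K).
Hypotheses (x_anticomm : forall i j, i != j -> x i * x j = - (x j * x i))
           (x_sqr : forall i, x i * x i = (q i)%:A) (q_neq0 : forall i, q i != 0).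

Lemma mul_x_prod i s : x i * \prod_(j <- s) x j
  = (-1) ^+ count (predC (pred1 i)) s *: (\prod_(j <- s) x j * x i).
Proof.
elim: s => [|j s IHs]; first by rewrite !big_nil mul1r mulr1 expr0 scale1r.
rewrite big_cons /=; have [->|ji] := eqVneq j i.
  by rewrite {1}IHs -scalerAr mulrA.
rewrite mulrA x_anticomm 1?eq_sym // mulNr -[x j * x i * _]mulrA IHs -scalerAr mulrA.
by rewrite add1n exprS mulN1r scaleNr.
Qed.

Lemma rev_monomial_mul_monomial X :
  rev_monomial x X * monomial x X = (\prod_(i <- enum X) q i)%:A.
Proof. exact: prod_rev_mul_prod. Qed.

Section Trace.
Variable t : {scalar A}.
Hypotheses (t_central : forall a b : A, t (a * b) = t (b * a)) (t1 : t 1 = 1).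
Hypothesis two_neq0 : (2%:R : K) != 0.

Lemma trace_prod_odd i s :
  odd (count (predC (pred1 i)) s) -> t (\prod_(j <- s) x j) = 0.
Proof.
(* t (x_i P x_i) is q_i t P by cyclicity, and - q_i t P by anticommutation. *)
move=> odd_s; set P := \prod_(j <- s) x j.
have tPx : t (P * x i * x i) = q i * t P by rewrite -mulrA x_sqr mulr_algr scalarZ.
have : t (x i * P * x i) = - (q i * t P).
  by rewrite -tPx mul_x_prod -signr_odd odd_s expr1 scaleN1r mulNr raddfN.
rewrite -mulrA t_central tPx => /eqP; rewrite -addr_eq0 -mulr2n -mulr_natr.
by rewrite !mulf_eq0 (negPf (q_neq0 i)) (negPf two_neq0) orbF => /eqP.
Qed.

Hypothesis n_even : ~~ odd n.

Lemma trace_rev_monomial_mul X Y : X != Y -> t (rev_monomial x X * monomial x Y) = 0.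
Proof.
move=> neqXY; have [i odd_i] := exists_odd_count_predC n_even neqXY.
by rewrite /rev_monomial /monomial -big_cat (trace_prod_odd odd_i).
Qed.

Lemma trace_monomial X : X != set0 -> t (monomial x X) = 0.
Proof.
move=> X_neq0; rewrite -[monomial x X]mul1r.
have -> : 1 = rev_monomial x set0 by rewrite /rev_monomial enum_set0 big_nil.
by rewrite trace_rev_monomial_mul // eq_sym.
Qed.

Lemma trace_rev_monomial_mul_diag X :
  t (rev_monomial x X * monomial x X) = \prod_(i <- enum X) q i.
Proof. by rewrite rev_monomial_mul_monomial scalarZ t1 mulr1. Qed.

Hypothesis dimA : \dim {:A} = (2 ^ n)%N.

Lemma size_monomials : size (monomials x) = (2 ^ n)%N.
Proof. by rewrite size_map -cardE -powersetT card_powerset cardsT card_ord. Qed.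

Let idx (j : 'I_(size (monomials x))) : {set 'I_n} :=
  nth set0 (enum [set: {set 'I_n}]) j.

Let nth_monomials (j : 'I_(size (monomials x))) :
  (monomials x)`_j = monomial x (idx j).
Proof. by rewrite (nth_map set0) // -(size_map (monomial x)). Qed.

Let eq_idx (i j : 'I_(size (monomials x))) : (idx i == idx j) = (i == j).
Proof. by rewrite nth_uniq ?enum_uniq // -(size_map (monomial x)). Qed.

Lemma monomials_free : free (monomials x).
Proof.
apply: (@biorthogonal_free _ _ _ (in_tuple (monomials x))
  (fun j => t \o (rev_monomial x (idx j) \*o idfun))) => [i j neq_ij|i] /=.
  by rewrite nth_monomials trace_rev_monomial_mul ?eq_idx.
rewrite nth_monomials trace_rev_monomial_mul_diag prodf_seq_neq0.
by apply/allP => k _; exact: q_neq0.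
Qed.

Lemma monomials_basis : basis_of fullv (monomials x).
Proof. by rewrite basisEfree monomials_free subvf size_monomials dimA leqnn. Qed.

Lemma trace_mul_eq0 a : (forall b, t (a * b) = 0) -> a = 0.
Proof.
move=> ta0; apply: (@biorthogonal_eq0 _ _ _ (in_tuple (monomials x))
  (fun j => t \o (rev_monomial x (idx j) \o* idfun))) => [i j neq_ij|i||i] /=.
- by rewrite nth_monomials t_central trace_rev_monomial_mul ?eq_idx.
- rewrite nth_monomials t_central trace_rev_monomial_mul_diag prodf_seq_neq0.
  by apply/allP => k _; exact: q_neq0.
- by rewrite (span_basis monomials_basis) memvf.
- exact: ta0.
Qed.

End Trace.

Lemma normalized_trace_unique (t t' : {scalar A}) :
  (2%:R : K) != 0 -> ~~ odd n -> \dim {:A} = (2 ^ n)%N ->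
  (forall a b : A, t (a * b) = t (b * a)) -> t 1 = 1 ->
  (forall a b : A, t' (a * b) = t' (b * a)) -> t' 1 = 1 ->
  t =1 t'.
Proof.
move=> two_neq0 n_even dimA t_central t1 t'_central t'1 a.
apply: (linear_eq_in_span (f := t) (g := t') (X := monomials x)); last first.
  by rewrite (span_basis (monomials_basis t_central t1 two_neq0 n_even dimA)) memvf.
move=> _ /mapP[X _ ->]; have [->|X_neq0] := eqVneq X set0.
  by rewrite /monomial enum_set0 big_nil t1 t'1.
by rewrite !trace_monomial.
Qed.

End CliffordFamily.

Lemma cvec_ReIm (R : rcfType) n (v : 'rV[R[i]]_n) :
  v = cvec (map_mx (@complex.Re R) v) + 'i%C *: cvec (map_mx (@complex.Im R) v).
Proof. by apply/rowP => j; rewrite !mxE /cplx [LHS]complexE. Qed.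

Section SigmaProduct.
Variables (R : rcfType) (n : nat) (G : 'M[R]_n) (A : falgType R[i]).
Variables (iota : 'rV[R[i]]_n -> A) (sigma T : A -> A) (tau : A -> R[i]).
Hypotheses (n_even : ~~ odd n) (G_sym : G^T = G) (G_unit : G \in unitmx).
Hypotheses (iota_linear : forall (c : R[i]) u v, iota (c *: u + v) = c *: iota u + iota v)
  (iota_sqr : forall v, iota v * iota v = (Bform G v v)%:A)
  (iota_span : span (monoms iota (fun i => delta_mx 0 i)) = fullv)
  (dimA : \dim {:A} = (2 ^ n)%N).
Hypotheses (sigmaD : forall a b, sigma (a + b) = sigma a + sigma b)
  (sigmaZ : forall (c : R[i]) a, sigma (c *: a) = Num.conj c *: sigma a)
  (sigmaM : forall a b, sigma (a * b) = sigma a * sigma b) (sigma1 : sigma 1 = 1)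
  (sigmaK : forall a, sigma (sigma a) = a)
  (sigma_iota : forall v, exists w, sigma (iota v) = iota w).
Hypotheses (T_linear : forall (c : R[i]) a b, T (c *: a + b) = c *: T a + T b)
  (TM : forall a b, T (a * b) = T b * T a) (T1 : T 1 = 1)
  (T_real : forall v : 'rV[R]_n, T (iota (cvec v)) = iota (cvec v)).
Hypotheses (tau_scalar : forall (c : R[i]) a b, tau (c *: a + b) = c * tau a + tau b)
  (tau_central : forall a b, tau (a * b) = tau (b * a)) (tau1 : tau 1 = 1).

Local Notation B := (Bform G).
Local Notation sp := (sigma_prod sigma T tau).

Let iotaL : {linear 'rV[R[i]]_n -> A} :=
  HB.pack iota (GRing.isLinear.Build _ _ _ _ iota iota_linear).
Let TL : {linear A -> A} := HB.pack T (GRing.isLinear.Build _ _ _ _ T T_linear).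
Let tauL : {scalar A} := HB.pack tau (GRing.isLinear.Build _ _ _ _ tau tau_scalar).

Let tauZ c a : tau (c *: a) = c * tau a := scalarZ tauL c a.

Let sigma0 : sigma 0 = 0.
Proof. by have := sigmaZ 0 0; rewrite rmorph0 !scale0r. Qed.

Let GC_sym : (map_mx (@cplx R) G)^T = map_mx (@cplx R) G.
Proof. by rewrite map_trmx G_sym. Qed.

Let GC_unit : map_mx (@cplx R) G \in unitmx.
Proof. by rewrite (map_unitmx (real_complex R)). Qed.

Let two_neq0 : (2%:R : R[i]) != 0.
Proof. by rewrite pnatr_eq0. Qed.

Let iota_anticomm (e : 'I_n -> 'rV[R[i]]_n) :
  (forall i j, i != j -> B (e i) (e j) = 0) ->
  forall i j, i != j -> iota (e i) * iota (e j) = - (iota (e j) * iota (e i)).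
Proof.
move=> e_orth i j neq_ij.
by apply: (clifford_anticomm_orth (iota := iotaL) GC_sym iota_sqr); exact: e_orth.
Qed.

Lemma tau_unique (t : A -> R[i]) :
  scalar t -> (forall a b, t (a * b) = t (b * a)) -> t 1 = 1 -> forall a, t a = tau a.
Proof.
move=> t_scalar t_central t1 a.
have [e [e_orth e_aniso]] := exists_orthogonal_basis GC_sym two_neq0 GC_unit.
exact: (normalized_trace_unique (x := fun i => iota (e i)) (q := fun i => B (e i) (e i))
  (iota_anticomm e_orth) (fun i => iota_sqr (e i)) e_aniso
  (t := HB.pack t (GRing.isLinear.Build _ _ _ _ t t_scalar)) (t' := tauL)).
Qed.

Let endo_fixing_V_id (f : A -> A) : linear f -> f 1 = 1 -> {morph f : a b / a * b} ->
  (forall i, f (iota (delta_mx 0 i)) = iota (delta_mx 0 i)) -> forall a, f a = a.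
Proof.
move=> f_linear; exact: (algebra_endo_id (x := fun i => iota (delta_mx 0 i))
  (f := HB.pack f (GRing.isLinear.Build _ _ _ _ f f_linear)) iota_span).
Qed.

Lemma T_iota v : T (iota v) = iota v.
Proof. by rewrite [v]cvec_ReIm addrC iota_linear T_linear !T_real. Qed.

Lemma TK a : T (T a) = a.
Proof.
by apply: (endo_fixing_V_id (f := fun b => T (T b))) => [c x y||x y|i];
  rewrite ?T_linear ?T1 ?TM ?T_iota.
Qed.

Lemma T_sigma a : T (sigma a) = sigma (T a).
Proof.
have sTsT b : sigma (T (sigma (T b))) = b.
  apply: (endo_fixing_V_id (f := fun b => sigma (T (sigma (T b))))) => [c x y||x y|i].
  - by rewrite !(T_linear, sigmaD, sigmaZ) conjCK.
  - by rewrite T1 sigma1 T1 sigma1.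
  - by rewrite TM sigmaM TM sigmaM.
  - have [w w_def] := sigma_iota (delta_mx 0 i).
    by rewrite T_iota w_def T_iota -w_def sigmaK.
by have := sTsT (T a); rewrite TK => <-; rewrite sigmaK.
Qed.

Lemma tau_T a : tau (T a) = tau a.
Proof.
apply: (tau_unique (t := fun b => tau (T b))) => [c x y|x y|].
- by rewrite T_linear tau_scalar.
- by rewrite !TM tau_central.
- by rewrite T1 tau1.
Qed.

Lemma tau_sigma a : tau (sigma a) = Num.conj (tau a).
Proof.
rewrite -(tau_unique (t := fun b => Num.conj (tau (sigma b)))) ?sigmaK //.
- by move=> c x y; rewrite sigmaD sigmaZ tau_scalar rmorphD rmorphM /= conjCK.
- by move=> x y; rewrite !sigmaM tau_central.
- by rewrite sigma1 tau1 rmorph1.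
Qed.

Lemma tau_mul_eq0 a : (forall b, tau (a * b) = 0) -> a = 0.
Proof.
have [e [e_orth e_aniso]] := exists_orthogonal_basis GC_sym two_neq0 GC_unit.
exact: (trace_mul_eq0 (x := fun i => iota (e i)) (q := fun i => B (e i) (e i))
  (iota_anticomm e_orth) (fun i => iota_sqr (e i)) e_aniso (t := tauL)).
Qed.

Lemma sigma_prod_hermitian : is_hermitian_form sp.
Proof.
split => [c a b1 b2|c a1 a2 b|a b]; rewrite /sigma_prod.
- by rewrite mulrDr -scalerAr tau_scalar.
- by rewrite T_linear sigmaD sigmaZ mulrDl -scalerAl tau_scalar.
- by rewrite -tau_sigma sigmaM sigmaK -(tau_T (T a * sigma b)) TM T_sigma TK.
Qed.

Lemma sigma_prod_nondegenerate : nondegenerate_form sp.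
Proof.
move=> a sp_a0; have sTa0 : sigma (T a) = 0 by apply: tau_mul_eq0.
by rewrite -[a]TK -[T a]sigmaK sTa0 sigma0; exact: raddf0 TL.
Qed.

Lemma sigma_prod_iota u u' w :
  sigma (iota u) = iota w -> sp (iota u) (iota u') = B w u'.
Proof.
move=> sigma_u; rewrite /sigma_prod T_iota sigma_u.
exact: (trace_clifford_mul (iota := iotaL) GC_sym two_neq0 iota_sqr (t := tauL)).
Qed.

Lemma T_prod ws : T (\prod_(w <- ws) iota w) = \prod_(w <- rev ws) iota w.
Proof.
elim: ws => [|w ws IHws]; first by rewrite !big_nil T1.
by rewrite big_cons TM IHws T_iota rev_cons -cats1 big_cat big_seq1.
Qed.

Lemma sigmaT_prod ws : {in ws, forall w, sigma (iota w) = iota w} ->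
  sigma (T (\prod_(w <- ws) iota w)) = \prod_(w <- rev ws) iota w.
Proof.
move=> ws_fixed; rewrite T_prod (big_morph sigma sigmaM sigma1).
by apply: eq_big_seq => w; rewrite mem_rev; exact: ws_fixed.
Qed.

Lemma sigma_prod_prod ws : {in ws, forall w, sigma (iota w) = iota w} ->
  sp (\prod_(w <- ws) iota w) (\prod_(w <- ws) iota w) = \prod_(w <- ws) B w w.
Proof.
move=> ws_fixed; rewrite /sigma_prod sigmaT_prod // (prod_rev_mul_prod iota_sqr).
by rewrite tauZ tau1 mulr1.
Qed.

Lemma sigma_prod_monomials e : pseudo_orthonormal_basis_Vsigma G iota sigma e ->
  pseudo_orthonormal_basis_A sp (monom iota e).
Proof.
case=> e_fixed _ _ e_orth e_sign.
have e_aniso i : B (e i) (e i) != 0.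
  by case: (e_sign i) => ->; rewrite ?oppr_eq0 oner_eq0.
have sT_monom X : sigma (T (monom iota e X)) = rev_monomial (fun i => iota (e i)) X.
  rewrite /monom -(big_map e xpredT) sigmaT_prod; first by rewrite -map_rev big_map.
  by move=> _ /mapP[i _ ->]; exact: e_fixed.
have x_anticomm := iota_anticomm e_orth.
have x_sqr i := iota_sqr (e i).
split => [|X1 X2 neq_X|X]; rewrite /sigma_prod ?sT_monom.
- exact: (monomials_basis x_anticomm x_sqr e_aniso (t := tauL)).
- exact: (trace_rev_monomial_mul x_anticomm x_sqr e_aniso (t := tauL)).
- have diag : tau (rev_monomial (fun i => iota (e i)) X * monom iota e X)
      = \prod_(i <- enum X) B (e i) (e i).
    exact: (trace_rev_monomial_mul_diag x_sqr (t := tauL)).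
  by rewrite diag; exact: prod_sign.
Qed.

End SigmaProduct.

Unset Implicit Arguments. Set Strict Implicit.

Theorem proposition3 (R : rcfType) (n : nat) (G : 'M[R]_n)
  (A : falgType R[i]) (iota : 'rV[R[i]]_n -> A)
  (sigma T : A -> A) (tau : A -> R[i]) :
  ~~ odd n ->
  G^T = G -> G \in unitmx ->
  is_complex_clifford G iota ->
  is_real_structure iota sigma ->
  is_transposition iota T ->
  is_normalized_trace tau ->
  let sp := sigma_prod sigma T tau in
  [/\ is_hermitian_form sp,
      nondegenerate_form sp,
      (* restricts to Q_sigma on V *)
      forall (v : 'rV[R]_n) (w : 'rV[R[i]]_n),
        sigma (iota (cvec v)) = iota w ->
        sp (iota (cvec v)) (iota (cvec v)) = Bform G w (cvec v),
      (* restricts to Q on V_sigma *)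
      (forall v : 'rV[R[i]]_n, in_Vsigma iota sigma v ->
        sp (iota v) (iota v) = Bform G v v) /\
      (* products of vectors of V_sigma *)
      forall ws : seq 'rV[R[i]]_n, (forall w, w \in ws -> in_Vsigma iota sigma w) ->
        sp (\prod_(w <- ws) iota w) (\prod_(w <- ws) iota w)
        = \prod_(w <- ws) Bform G w w
    & (* pseudo-orthonormal bases *)
      forall e : 'I_n -> 'rV[R[i]]_n,
        pseudo_orthonormal_basis_Vsigma G iota sigma e ->
        pseudo_orthonormal_basis_A sp (monom iota e)].
Proof.
move=> n_even G_sym G_unit [iota_linear iota_sqr iota_span dimA]
  [sigmaD sigmaZ sigmaM sigma1 [sigmaK sigma_iota]] [T_linear TM T1 T_real]
  [tau_scalar tau_central tau1] sp.
split.
- exact: (sigma_prod_hermitian (G := G) (iota := iota)).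
- exact: (sigma_prod_nondegenerate (G := G) (iota := iota)).
- by move=> v w; exact: sigma_prod_iota.
- split=> [v|ws ws_fixed]; first exact: sigma_prod_iota.
  exact: sigma_prod_prod.
- exact: sigma_prod_monomials.
Qed.
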